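(* Suppose $f\colon[0,\infty)\to[0,\infty)$ satisfies (M), (S) and (L). For $k>0$ set $g(\sigma)=F^{-1}(\sigma^k)$ for $\sigma\in(0,F_0^{1/k})$. Then there exists $\sigma_*>0$ such that $g$ is convex on $(0,\sigma_* )$.
   Context: (M) $f$ continuous, nondecreasing, $f(u)>0$ for $u>0$. (S) there is $\tau_0>0$ with $f\in C^1([\tau_0,\infty))$ and $\int_{\tau_0}^\infty ds/f(s)<\infty$. $F(u)=\int_u^\infty ds/f(s)$ for $u>0$, $F_0=\lim_{u\to0}F(u)$ (possibly $\infty$); $F^{-1}\colon(0,F_0)\to(0,\infty)$ is the inverse of $F$. (L) $q_f:=\lim_{u\to\infty}f'(u)F(u)$ exists and is finite. *)

From Stdlib Require Import Reals Lra.
From Coquelicot Require Import Coquelicot.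
Open Scope R_scope.

Definition Fint (f : R -> R) (u : R) : R :=
  RInt_gen (fun s => / f s) (at_point u) (Rbar_locally p_infty).

Definition convex_on_oo (g : R -> R) (a b : R) : Prop :=
  forall x y t, a < x < b -> a < y < b -> 0 <= t <= 1 ->
    g (t * x + (1 - t) * y) <= t * g x + (1 - t) * g y.

From Stdlib Require Import Reals Lra.
From Coquelicot Require Import Coquelicot.
Open Scope R_scope.

(* Near [sigma = 0], [g] is the inverse of the decreasing function [phi = F^(1/k)]
   near [+oo].  There [phi' = - F^(1/k - 1) / (k f)], and [ln (- k phi')] has
   derivative [(1 - 1/k - f' F) / (f F)].  This is eventually negative because
   [f' F -> q >= 1]: if [q < 1], then [(f F)' = f' F - 1] would eventually stay
   below a negative constant, forcing [f F < 0].  Hence [phi'] is eventually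
   nondecreasing, [phi] is convex and decreasing there, and the inverse of a
   decreasing convex function is convex. *)

Lemma convex_on_oo_of_chords (g : R -> R) (a b : R) :
  (forall x z y, a < x -> x < z -> z < y -> y < b ->
     (g z - g x) * (y - z) <= (g y - g z) * (z - x)) ->
  convex_on_oo g a b.
Proof.
  intros Hchord.
  assert (Hordered : forall x y t, a < x < b -> a < y < b -> 0 <= t <= 1 -> x < y ->
    g (t * x + (1 - t) * y) <= t * g x + (1 - t) * g y).
  { intros x y t Hx Hy Ht Hxy.
    destruct (Req_dec t 0) as [->|Ht0].
    { replace (0 * x + (1 - 0) * y) with y by ring. lra. }
    destruct (Req_dec t 1) as [->|Ht1].
    { replace (1 * x + (1 - 1) * y) with x by ring. lra. }
    set (z := t * x + (1 - t) * y).
    assert (Hyz : y - z = t * (y - x)) by (unfold z; ring).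
    assert (Hzx : z - x = (1 - t) * (y - x)) by (unfold z; ring).
    assert (Hc := Hchord x z y ltac:(lra) ltac:(nra) ltac:(nra) ltac:(lra)).
    rewrite Hyz, Hzx in Hc.
    apply Rmult_le_reg_r with (y - x); nra. }
  intros x y t Hx Hy Ht.
  destruct (Rtotal_order x y) as [Hxy|[<-|Hxy]].
  - now apply Hordered.
  - replace (t * x + (1 - t) * x) with x by ring. lra.
  - replace (t * x + (1 - t) * y) with ((1 - t) * y + (1 - (1 - t)) * x) by ring.
    replace (t * g x + (1 - t) * g y) with ((1 - t) * g y + (1 - (1 - t)) * g x) by ring.
    apply Hordered; auto; lra.
Qed.

Lemma is_RInt_gen_ge_0 (g : R -> R) (a l : R) :
  (forall x, a <= x -> 0 <= g x) ->
  is_RInt_gen g (at_point a) (Rbar_locally p_infty) l -> 0 <= l.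
Proof.
  intros Hg Hl.
  assert (Hnorm : norm (scal 0 l) <= l).
  { apply (RInt_gen_norm (V := R_CompleteNormedModule) (Fa := at_point a)
             (Fb := Rbar_locally p_infty) (fun x => scal 0 (g x)) g).
    - exists (fun x => x = a) (fun y => a < y); [now red | exists a; auto |].
      intros x y -> Hy; simpl; lra.
    - exists (fun x => x = a) (fun _ => True); [now red | exists 0; auto |].
      intros x y -> _ z Hz; simpl in Hz.
      change (Rabs (0 * g z) <= g z). rewrite Rmult_0_l, Rabs_R0. apply Hg; lra.
    - now apply (is_RInt_gen_scal (V := R_NormedModule)).
    - exact Hl. }
  change (Rabs (0 * l) <= l) in Hnorm.
  now rewrite Rmult_0_l, Rabs_R0 in Hnorm.
Qed.

Lemma MVT_right_of (h dh : R -> R) (U a b : R) :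
  (forall x, U < x -> is_derive h x (dh x)) -> U < a -> a <= b ->
  exists c, a <= c <= b /\ h b - h a = dh c * (b - a).
Proof.
  intros Hd Ha Hab.
  destruct (MVT_gen h a b dh) as [c Hc];
    rewrite Rmin_left, Rmax_right in * by lra.
  - intros x Hx. apply Hd. lra.
  - intros x Hx. apply continuity_pt_filterlim, (ex_derive_continuous (V := R_NormedModule)).
    exists (dh x). apply Hd. lra.
  - now exists c.
Qed.

Lemma increment_le_of_derive_le (h dh : R -> R) (U m : R) :
  (forall x, U < x -> is_derive h x (dh x)) -> (forall x, U < x -> dh x <= m) ->
  forall x y, U < x -> x <= y -> h y - h x <= m * (y - x).
Proof.
  intros Hd Hm x y Hx Hxy.
  destruct (MVT_right_of h dh U x y Hd Hx Hxy) as [c [Hc ->]].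
  apply Rmult_le_compat_r; [lra | apply Hm; lra].
Qed.

Lemma derive_lim_ge_0_of_nonneg (h dh : R -> R) (U l : R) :
  (forall x, U < x -> is_derive h x (dh x)) -> (forall x, U < x -> 0 <= h x) ->
  filterlim dh (Rbar_locally p_infty) (locally l) -> 0 <= l.
Proof.
  intros Hd Hh Hl.
  destruct (Rle_or_lt 0 l) as [|Hneg]; [easy | exfalso].
  assert (Heps : 0 < - l / 2) by lra.
  destruct (proj1 (filterlim_locally dh l) Hl (mkposreal _ Heps)) as [M HM].
  set (A := Rmax M U).
  assert (HMA : M <= A) by apply Rmax_l.
  assert (HUA : U <= A) by apply Rmax_r.
  assert (Hslope : forall x, A < x -> dh x <= l / 2).
  { intros x Hx.
    assert (Hb : Rabs (dh x - l) < - l / 2) by (apply HM; lra).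
    apply Rabs_def2 in Hb. lra. }
  assert (HhA := Hh (A + 1) ltac:(lra)).
  set (B := A + 1 + (h (A + 1) + 1) / (- l / 2)).
  assert (HAB : A + 1 < B).
  { assert (0 < (h (A + 1) + 1) / (- l / 2)) by (apply Rdiv_lt_0_compat; lra).
    unfold B; lra. }
  assert (HB := Hh B ltac:(lra)).
  assert (Hinc := increment_le_of_derive_le h dh A (l / 2)
                    (fun x (Hx : A < x) => Hd x ltac:(lra)) Hslope (A + 1) B
                    ltac:(lra) ltac:(lra)).
  assert (HBA : - l / 2 * (B - (A + 1)) = h (A + 1) + 1) by (unfold B; field; lra).
  lra.
Qed.

Lemma chord_slopes_le_of_derive_nondecreasing (h dh : R -> R) (U : R) :
  (forall x, U < x -> is_derive h x (dh x)) ->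
  (forall x y, U < x -> x <= y -> dh x <= dh y) ->
  forall x y z, U < x -> x < y -> y < z ->
    (h y - h x) * (z - y) <= (h z - h y) * (y - x).
Proof.
  intros Hd Hmono x y z Hx Hxy Hyz.
  destruct (MVT_right_of h dh U x y Hd Hx ltac:(lra)) as [c1 [Hc1 ->]].
  destruct (MVT_right_of h dh U y z Hd ltac:(lra) ltac:(lra)) as [c2 [Hc2 ->]].
  assert (Hc12 : dh c1 <= dh c2) by (apply Hmono; lra).
  assert (Hpos : 0 <= (y - x) * (z - y)) by nra.
  nra.
Qed.

Lemma convex_on_oo_of_inverse (g h : R -> R) (U a b : R) :
  (forall x y, U < x -> x <= y -> h y <= h x) ->
  (forall x y z, U < x -> x < y -> y < z ->
     (h y - h x) * (z - y) <= (h z - h y) * (y - x)) ->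
  (forall s, a < s < b -> U < g s /\ h (g s) = s) ->
  convex_on_oo g a b.
Proof.
  intros Hanti Hslopes Hg.
  assert (Hdecr : forall x z, a < x -> x < z -> z < b -> g z < g x).
  { intros x z Hx Hxz Hz.
    destruct (Hg x ltac:(lra)) as [Ux Hx'], (Hg z ltac:(lra)) as [_ Hz'].
    destruct (Rlt_or_le (g z) (g x)) as [|Hle]; [easy | exfalso].
    assert (H := Hanti _ _ Ux Hle). lra. }
  apply convex_on_oo_of_chords. intros x z y Hx Hxz Hzy Hy.
  (* The chord inequality of [g] at [x < z < y] is that of [h] at [g y < g z < g x]. *)
  destruct (Hg x ltac:(lra)) as [_ Hx'], (Hg z ltac:(lra)) as [_ Hz'],
    (Hg y ltac:(lra)) as [Uy Hy'].
  assert (H := Hslopes (g y) (g z) (g x) Uy (Hdecr z y ltac:(lra) Hzy Hy)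
                 (Hdecr x z Hx Hxz ltac:(lra))).
  rewrite Hx', Hz', Hy' in H. nra.
Qed.

Section ImproperIntegral.

Variables (f : R -> R) (tau0 : R).
Hypothesis f_cont : forall u, 0 < u -> continuous f u.
Hypothesis f_pos : forall u, 0 < u -> 0 < f u.
Hypothesis tau0_pos : 0 < tau0.
Hypothesis f_int : ex_RInt_gen (fun s => / f s) (at_point tau0) (Rbar_locally p_infty).

Lemma continuous_inv_f u : 0 < u -> continuous (fun s => / f s) u.
Proof.
  intros Hu. apply (continuous_comp f (fun y => / y)); [now apply f_cont |].
  apply continuous_Rinv. specialize (f_pos u Hu). lra.
Qed.

Lemma ex_RInt_inv_f a b : 0 < a -> 0 < b -> ex_RInt (fun s => / f s) a b.
Proof.
  intros Ha Hb. apply (ex_RInt_continuous (V := R_CompleteNormedModule)).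
  intros z [Hz _]. apply continuous_inv_f.
  apply Rlt_le_trans with (2 := Hz). now apply Rmin_glb_lt.
Qed.

Lemma is_RInt_gen_inv_f u : 0 < u ->
  is_RInt_gen (fun s => / f s) (at_point u) (Rbar_locally p_infty)
    (RInt (fun s => / f s) u tau0 + Fint f tau0).
Proof.
  intros Hu. unfold Fint. apply (is_RInt_gen_Chasles (V := R_NormedModule) _ tau0).
  - apply is_RInt_gen_at_point, (RInt_correct (V := R_CompleteNormedModule)).
    apply ex_RInt_inv_f; easy.
  - apply (RInt_gen_correct (V := R_CompleteNormedModule)). exact f_int.
Qed.

Lemma Fint_Chasles u : 0 < u ->
  Fint f u = RInt (fun s => / f s) u tau0 + Fint f tau0.
Proof.
  intros Hu. unfold Fint at 1. apply (is_RInt_gen_unique (V := R_CompleteNormedModule)).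
  now apply is_RInt_gen_inv_f.
Qed.

Lemma is_RInt_gen_Fint u : 0 < u ->
  is_RInt_gen (fun s => / f s) (at_point u) (Rbar_locally p_infty) (Fint f u).
Proof.
  intros Hu. rewrite Fint_Chasles by easy. now apply is_RInt_gen_inv_f.
Qed.

Lemma Fint_sub u v : 0 < u -> 0 < v ->
  Fint f u - Fint f v = RInt (fun s => / f s) u v.
Proof.
  intros Hu Hv. rewrite (Fint_Chasles u Hu), (Fint_Chasles v Hv).
  rewrite <- (RInt_Chasles (fun s => / f s) u v tau0) by now apply ex_RInt_inv_f.
  unfold plus; simpl. ring.
Qed.

Lemma is_derive_Fint u : 0 < u -> is_derive (Fint f) u (- / f u).
Proof.
  intros Hu.
  apply (is_derive_ext_loc (fun a => RInt (fun s => / f s) a tau0 + Fint f tau0)).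
  { apply (locally_interval _ u 0 p_infty); [easy | easy |].
    intros y Hy _. symmetry. now apply Fint_Chasles. }
  replace (- / f u) with (plus (opp (/ f u)) 0) by (unfold plus, opp; simpl; ring).
  apply (is_derive_plus (fun a => RInt (fun s => / f s) a tau0) (fun _ => Fint f tau0)).
  2: apply (is_derive_const (K := R_AbsRing) (V := R_NormedModule)).
  apply (is_derive_RInt' (fun s => / f s) _ u tau0).
  2: now apply continuous_inv_f.
  apply (locally_interval _ u 0 p_infty); [easy | easy |].
  intros y Hy _. apply (RInt_correct (V := R_CompleteNormedModule)).
  now apply ex_RInt_inv_f.
Qed.

Lemma Fint_decreasing u v : 0 < u -> u < v -> Fint f v < Fint f u.
Proof.
  intros Hu Huv.
  assert (Hint : 0 < RInt (fun s => / f s) u v).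
  { apply RInt_gt_0; [easy | |].
    - intros x Hx. apply Rinv_0_lt_compat, f_pos. lra.
    - intros x Hx. apply continuous_inv_f. lra. }
  rewrite <- Fint_sub in Hint by lra. lra.
Qed.

Lemma Fint_antitone u v : 0 < u -> u <= v -> Fint f v <= Fint f u.
Proof.
  intros Hu [Huv | ->]; [apply Rlt_le, Fint_decreasing |]; lra.
Qed.

Lemma Fint_pos u : 0 < u -> 0 < Fint f u.
Proof.
  intros Hu.
  assert (Hnn : 0 <= Fint f (u + 1)).
  { apply (is_RInt_gen_ge_0 (fun s => / f s) (u + 1)).
    - intros x Hx. apply Rlt_le, Rinv_0_lt_compat, f_pos. lra.
    - apply is_RInt_gen_Fint. lra. }
  assert (Hlt := Fint_decreasing u (u + 1) Hu ltac:(lra)). lra.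
Qed.

Lemma Fint_le_lim_at_0 (F0 : Rbar) :
  filterlim (Fint f) (at_right 0) (Rbar_locally F0) ->
  forall u, 0 < u -> Rbar_le (Fint f u) F0.
Proof.
  intros Hlim u Hu.
  apply (filterlim_le (F := at_right 0) (fun _ => Fint f u) (Fint f)); [| apply filterlim_const | easy].
  apply (locally_interval _ 0 m_infty u); [easy | easy |].
  intros x _ Hxu Hx. apply Fint_antitone; [easy | apply Rlt_le, Hxu].
Qed.

End ImproperIntegral.

Lemma Rpower_Rpower_inverse (x a b : R) : 0 < x -> a * b = 1 -> Rpower (Rpower x a) b = x.
Proof. intros Hx Hab. rewrite Rpower_mult, Hab. now apply Rpower_1. Qed.

Section FintPower.

Variables (f : R -> R) (tau0 k q : R).
Hypothesis f_cont : forall u, 0 < u -> continuous f u.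
Hypothesis f_pos : forall u, 0 < u -> 0 < f u.
Hypothesis tau0_pos : 0 < tau0.
Hypothesis f_int : ex_RInt_gen (fun s => / f s) (at_point tau0) (Rbar_locally p_infty).
Hypothesis f_derivable : forall u, tau0 < u -> ex_derive f u.
Hypothesis f'F_lim :
  filterlim (fun u => Derive f u * Fint f u) (Rbar_locally p_infty) (locally q).
Hypothesis k_pos : 0 < k.

Lemma is_derive_f_Fint u : tau0 < u ->
  is_derive (fun v => f v * Fint f v) u (Derive f u * Fint f u - 1).
Proof.
  intros Hu. assert (Hf := f_pos u ltac:(lra)).
  assert (HF : is_derive (Fint f) u (- / f u)) by (apply (is_derive_Fint f tau0); auto; lra).
  auto_derive.
  - split; [now apply f_derivable |]. split; [now exists (- / f u) | easy].
  - change (fun x : R => Fint f x) with (Fint f); change (fun x : R => f x) with f.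
    rewrite (is_derive_unique _ _ _ HF). field. lra.
Qed.

Lemma q_ge_1 : 1 <= q.
Proof.
  enough (0 <= q - 1) by lra.
  apply (derive_lim_ge_0_of_nonneg (fun u => f u * Fint f u)
           (fun u => Derive f u * Fint f u - 1) tau0).
  - exact is_derive_f_Fint.
  - intros u Hu. apply Rmult_le_pos; apply Rlt_le; [apply f_pos | apply (Fint_pos f tau0)]; auto; lra.
  - apply (is_lim_minus' (fun u => Derive f u * Fint f u) (fun _ => 1) p_infty q 1).
    + exact f'F_lim.
    + apply is_lim_const.
Qed.

(* [Fpow] is [phi = F^(1/k)] and [Fpow_log_slope] is [ln (- k phi')]. *)
Definition Fpow (u : R) : R := Rpower (Fint f u) (/ k).

Definition Fpow_log_slope (u : R) : R := (/ k - 1) * ln (Fint f u) - ln (f u).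

Lemma is_derive_Fpow u : tau0 < u ->
  is_derive Fpow u (- / k * exp (Fpow_log_slope u)).
Proof.
  intros Hu. assert (Hf := f_pos u ltac:(lra)).
  assert (HF0 : 0 < Fint f u) by (apply (Fint_pos f tau0); auto; lra).
  assert (HF : is_derive (Fint f) u (- / f u)) by (apply (is_derive_Fint f tau0); auto; lra).
  unfold Fpow, Fpow_log_slope, Rpower. auto_derive.
  - split; [now exists (- / f u) | easy].
  - change (fun x : R => Fint f x) with (Fint f).
    rewrite (is_derive_unique _ _ _ HF).
    replace ((/ k - 1) * ln (Fint f u) - ln (f u))
      with (/ k * ln (Fint f u) + - ln (Fint f u) + - ln (f u)) by ring.
    rewrite !exp_plus, !exp_Ropp, !exp_ln by lra.
    field. lra.
Qed.

Lemma is_derive_Fpow_log_slope u : tau0 < u ->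
  is_derive Fpow_log_slope u ((1 - / k - Derive f u * Fint f u) / (f u * Fint f u)).
Proof.
  intros Hu. assert (Hf := f_pos u ltac:(lra)).
  assert (HF0 : 0 < Fint f u) by (apply (Fint_pos f tau0); auto; lra).
  assert (HF : is_derive (Fint f) u (- / f u)) by (apply (is_derive_Fint f tau0); auto; lra).
  unfold Fpow_log_slope. auto_derive.
  - repeat split; auto; now exists (- / f u).
  - change (fun x : R => Fint f x) with (Fint f); change (fun x : R => f x) with f.
    rewrite (is_derive_unique _ _ _ HF). field. lra.
Qed.

(* Eventually [f' F > 1 - 1/k], because [f' F -> q >= 1]. *)
Lemma Fpow_log_slope_eventually_antitone : exists U, tau0 < U /\
  forall x y, U < x -> x <= y -> Fpow_log_slope y <= Fpow_log_slope x.
Proof.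
  assert (Hq := q_ge_1).
  assert (Hk : 0 < / k) by now apply Rinv_0_lt_compat.
  destruct (proj1 (filterlim_locally _ q) f'F_lim (mkposreal _ Hk)) as [M HM].
  exists (Rmax M tau0 + 1).
  split; [pose proof (Rmax_r M tau0); lra |].
  intros x y Hx Hxy.
  enough (Fpow_log_slope y - Fpow_log_slope x <= 0 * (y - x)) by lra.
  apply (increment_le_of_derive_le Fpow_log_slope
           (fun u => (1 - / k - Derive f u * Fint f u) / (f u * Fint f u))
           (Rmax M tau0)); [| | lra | easy].
  - intros u Hu. apply is_derive_Fpow_log_slope. pose proof (Rmax_r M tau0); lra.
  - intros u Hu. pose proof (Rmax_l M tau0); pose proof (Rmax_r M tau0).
    assert (Hf := f_pos u ltac:(lra)).
    assert (HF0 : 0 < Fint f u) by (apply (Fint_pos f tau0); auto; lra).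
    assert (Hb : Rabs (Derive f u * Fint f u - q) < / k) by (apply HM; lra).
    apply Rabs_def2 in Hb.
    apply Rmult_le_0_r; [lra |].
    apply Rlt_le, Rinv_0_lt_compat, Rmult_lt_0_compat; lra.
Qed.

Lemma Fpow_eventually_convex : exists U, tau0 < U /\
  forall x y z, U < x -> x < y -> y < z ->
    (Fpow y - Fpow x) * (z - y) <= (Fpow z - Fpow y) * (y - x).
Proof.
  destruct Fpow_log_slope_eventually_antitone as [U [HU Hanti]].
  exists U. split; [easy |].
  apply (chord_slopes_le_of_derive_nondecreasing _ (fun u => - / k * exp (Fpow_log_slope u))).
  - intros x Hx. apply is_derive_Fpow. lra.
  - intros x y Hx Hxy.
    assert (Hk : 0 < / k) by now apply Rinv_0_lt_compat.
    assert (exp (Fpow_log_slope y) <= exp (Fpow_log_slope x)).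
    { destruct (Hanti x y Hx Hxy) as [Hlt | ->]; [apply Rlt_le, exp_increasing |]; lra. }
    nra.
Qed.

Lemma Fpow_antitone x y : 0 < x -> x <= y -> Fpow y <= Fpow x.
Proof.
  intros Hx Hxy. apply Rle_Rpower_l.
  - apply Rlt_le, Rinv_0_lt_compat, k_pos.
  - split; [apply (Fint_pos f tau0) | apply (Fint_antitone f tau0)]; auto; lra.
Qed.

End FintPower.

Theorem lemma3p2 (f : R -> R) (k : R) (F0 : Rbar) (Finv : R -> R)
  (* (M) *)
  (Hnonneg : forall u, 0 <= u -> 0 <= f u)
  (Hcont0 : filterlim f (at_right 0) (locally (f 0)))
  (Hcont : forall u, 0 < u -> continuous f u)
  (Hmono : forall u v, 0 <= u -> u <= v -> f u <= f v)
  (Hpos : forall u, 0 < u -> 0 < f u)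
  (* (S) *)
  (HS : exists tau0, 0 < tau0 /\
          (forall u, tau0 < u -> ex_derive f u /\ continuous (Derive f) u) /\
          ex_RInt_gen (fun s => / f s) (at_point tau0) (Rbar_locally p_infty))
  (* F_0 = lim_{u -> 0+} F(u) *)
  (HF0 : filterlim (Fint f) (at_right 0) (Rbar_locally F0))
  (* F^{-1} : (0, F_0) -> (0, oo) is the inverse of F *)
  (HFinv : forall t, 0 < t -> Rbar_lt (Finite t) F0 ->
             0 < Finv t /\ Fint f (Finv t) = t)
  (* (L) *)
  (HL : exists q : R,
          filterlim (fun u => Derive f u * Fint f u) (Rbar_locally p_infty) (locally q))
  (Hk : 0 < k) :
  exists sigma_s : R, 0 < sigma_s /\
    (forall sigma, 0 < sigma < sigma_s -> Rbar_lt (Finite (Rpower sigma k)) F0) /\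
    convex_on_oo (fun sigma => Finv (Rpower sigma k)) 0 sigma_s.
Proof.
  destruct HS as [tau0 [Htau0 [Hder Hint]]], HL as [q Hq].
  destruct (Fpow_eventually_convex f tau0 k q) as [U [HU Hslopes]]; auto.
  { intros u Hu. apply Hder, Hu. }
  assert (HFU : 0 < Fint f U) by (apply (Fint_pos f tau0); auto; lra).
  assert (Hrange : forall s, 0 < s < Fpow f k U ->
            0 < Rpower s k /\ Rpower s k < Fint f U /\ Rbar_lt (Rpower s k) F0).
  { intros s Hs.
    assert (Hlt : Rpower s k < Fint f U).
    { rewrite <- (Rpower_Rpower_inverse (Fint f U) (/ k) k HFU) by (field; lra).
      now apply Rlt_Rpower_l. }
    assert (HF0U := Fint_le_lim_at_0 f tau0 Hcont Hpos Htau0 Hint F0 HF0 U ltac:(lra)).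
    split; [apply exp_pos | split; [easy |]].
    destruct F0 as [F0| |]; simpl in *; lra. }
  exists (Fpow f k U). split; [apply exp_pos | split; [apply Hrange |]].
  apply (convex_on_oo_of_inverse _ (Fpow f k) U); [| exact Hslopes |].
  - intros x y Hx Hxy. apply (Fpow_antitone f tau0); auto; lra.
  - intros s Hs. destruct (Hrange s Hs) as [Hs0 [HsU HsF0]].
    destruct (HFinv _ Hs0 HsF0) as [Hinv0 Hinv].
    split.
    + destruct (Rlt_or_le U (Finv (Rpower s k))) as [|Hle]; [easy | exfalso].
      assert (H := Fint_antitone f tau0 Hcont Hpos Htau0 Hint _ _ Hinv0 Hle). lra.
    + unfold Fpow. rewrite Hinv. apply Rpower_Rpower_inverse; [lra | field; lra].
Qed.
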